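(* Let $\mathfrak A=\langle A,f,g\rangle$ be a betweenness algebra (resp. weak, strong betweenness algebra). Then the Stone map $h\colon A\to 2^{\mathrm{Ult}(A)}$, $h(x)=\{\mathcal U\in\mathrm{Ult}(A)\mid x\in\mathcal U\}$, is an embedding of $\mathfrak A$ into the algebra $\mathrm{Em}^{ps}(\mathfrak A)=\langle 2^{\mathrm{Ult}(A)},\langle Q_f\rangle,[\![S_g]\!]\rangle$, and $\mathrm{Em}^{ps}(\mathfrak A)$ is a betweenness algebra (resp. weak, strong betweenness algebra).
   Context: A PS-algebra is $\langle A,f,g\rangle$, $A$ a Boolean algebra with at least two elements (operations $+,\cdot,-,0,1$), $f,g\colon A^2\to A$, $f$ normal ($f(x,y)=0$ if $x=0$ or $y=0$) and additive in each argument, $g$ co-normal ($g(x,y)=1$ if $x=0$ or $y=0$) and co-additive in each argument ($g(x+x',y)=g(x,y)g(x',y)$, $g(x,y+y')=g(x,y)g(x,y')$). Axioms (for all $x,y,z,a,b$): (ABT0) $x\leq f(x,x)$; (ABT1$_f$) $f(x,y)\leq f(y,x)$; (ABT1$_g$) $g(x,y)\leq g(y,x)$; (ABT2) $y\cdot f(x,z)\leq f(x\cdot f(x,y),z)$; (ABT3) $f(x,g(x,-y)\cdot y)\leq y$; (wMIA) $x\neq0,y\neq0\Rightarrow g(x,y)\leq f(x,y)$; (ABTW) $a\neq0\Rightarrow g(a,a)\leq a$; (ABT2$^{\mathrm s}$) $b\neq0\Rightarrow a\leq f(a,b)$. Betweenness algebra: (ABT0),(ABT1$_f$),(ABT1$_g$),(ABT2),(ABT3),(wMIA).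 Weak betweenness algebra: (ABT0),(ABT1$_f$),(ABT1$_g$),(ABT2),(ABTW). Strong betweenness algebra: (ABT1$_f$),(ABT1$_g$),(ABT3),(wMIA),(ABT2$^{\mathrm s}$). $\mathrm{Ult}(A)$ is the set of ultrafilters of $A$; $Q_f(\mathcal U_1,\mathcal U_2,\mathcal U_3)\iff f[\mathcal U_1\times\mathcal U_3]\subseteq\mathcal U_2$; $S_g(\mathcal U_1,\mathcal U_2,\mathcal U_3)\iff g[\mathcal U_1\times\mathcal U_3]\cap\mathcal U_2\neq\emptyset$. For a ternary relation $R$ on a set $W$ and $X,Y\subseteq W$: $\langle R\rangle(X,Y)=\{u\in W\mid\exists x\in X\,\exists y\in Y\,R(x,u,y)\}$ and $[\![R]\!](X,Y)=\{u\in W\mid\forall x\in X\,\forall y\in Y\,R(x,u,y)\}$. An embedding is an injective map preserving the Boolean operations and $f,g$. *)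

From HB Require Import structures.
From mathcomp Require Import all_boot all_order.
From mathcomp Require Import boolp classical_sets.
Set Implicit Arguments. Unset Strict Implicit. Unset Printing Implicit Defensive.
Import Order.TTheory.

(* A Boolean algebra is a complemented distributive lattice with top and bottom
   (ctbDistrLatticeType): + = Order.join, . = Order.meet, - = Order.compl,
   0 = \bot, 1 = \top. *)

Section PS.
Context {d : Order.disp_t} (A : ctbDistrLatticeType d).
Local Open Scope order_scope.
Implicit Types (f g : A -> A -> A).

Definition nontrivialBA : Prop := (\bot : A) <> \top.

Definition normal f : Prop := forall x y : A, (x = \bot \/ y = \bot) -> f x y = \bot.
Definition additive f : Prop :=
  (forall x x' y, f (Order.join x x') y = Order.join (f x y) (f x' y)) /\
  (forall x y y', f x (Order.join y y') = Order.join (f x y) (f x y')).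
Definition conormal g : Prop := forall x y : A, (x = \bot \/ y = \bot) -> g x y = \top.
Definition coadditive g : Prop :=
  (forall x x' y, g (Order.join x x') y = Order.meet (g x y) (g x' y)) /\
  (forall x y y', g x (Order.join y y') = Order.meet (g x y) (g x y')).

Definition PS_algebra f g : Prop :=
  [/\ nontrivialBA, normal f, additive f, conormal g & coadditive g].

Definition ABT0 f : Prop := forall x : A, x <= f x x.
Definition ABT1f f : Prop := forall x y : A, f x y <= f y x.
Definition ABT1g g : Prop := forall x y : A, g x y <= g y x.
Definition ABT2 f : Prop :=
  forall x y z : A, Order.meet y (f x z) <= f (Order.meet x (f x y)) z.
Definition ABT3 f g : Prop :=
  forall x y : A, f x (Order.meet (g x (Order.compl y)) y) <= y.
Definition wMIA f g : Prop :=
  forall x y : A, x <> \bot -> y <> \bot -> g x y <= f x y.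
Definition ABTW g : Prop := forall a : A, a <> \bot -> g a a <= a.
Definition ABT2s f : Prop := forall a b : A, b <> \bot -> a <= f a b.

Definition betweenness_algebra f g : Prop :=
  PS_algebra f g /\ ABT0 f /\ ABT1f f /\ ABT1g g /\ ABT2 f /\ ABT3 f g /\ wMIA f g.
Definition weak_betweenness_algebra f g : Prop :=
  PS_algebra f g /\ ABT0 f /\ ABT1f f /\ ABT1g g /\ ABT2 f /\ ABTW g.
Definition strong_betweenness_algebra f g : Prop :=
  PS_algebra f g /\ ABT1f f /\ ABT1g g /\ ABT3 f g /\ wMIA f g /\ ABT2s f.

Definition ultrafilter (U : set A) : Prop :=
  [/\ U \top, ~ U \bot,
      (forall x y, U x -> U y -> U (Order.meet x y)),
      (forall x y, U x -> x <= y -> U y) &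
      (forall x, U x \/ U (Order.compl x))].

Definition Ult : Type := {U : set A | ultrafilter U}.

Definition Q_f f (U1 U2 U3 : Ult) : Prop :=
  forall x y, proj1_sig U1 x -> proj1_sig U3 y -> proj1_sig U2 (f x y).
Definition S_g g (U1 U2 U3 : Ult) : Prop :=
  exists x y, [/\ proj1_sig U1 x, proj1_sig U3 y & proj1_sig U2 (g x y)].

Definition stone (x : A) : set Ult := fun U => proj1_sig U x.
End PS.

Definition diamondR {W : Type} (R : W -> W -> W -> Prop) (X Y : set W) : set W :=
  fun u => exists x y, [/\ X x, Y y & R x u y].
Definition boxR {W : Type} (R : W -> W -> W -> Prop) (X Y : set W) : set W :=
  fun u => forall x y, X x -> Y y -> R x u y.

Definition Em_f {d} {A : ctbDistrLatticeType d} (f : A -> A -> A) :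
  set (Ult A) -> set (Ult A) -> set (Ult A) := diamondR (Q_f f).
Definition Em_g {d} {A : ctbDistrLatticeType d} (g : A -> A -> A) :
  set (Ult A) -> set (Ult A) -> set (Ult A) := boxR (S_g g).

Definition embedding {d d'} {A : ctbDistrLatticeType d} {B : ctbDistrLatticeType d'}
  (f g : A -> A -> A) (f' g' : B -> B -> B) (h : A -> B) : Prop :=
  injective h /\
  [/\ (forall x y, h (Order.join x y) = Order.join (h x) (h y)),
      (forall x y, h (Order.meet x y) = Order.meet (h x) (h y)),
      (forall x, h (Order.compl x) = Order.compl (h x)),
      (h Order.bottom = Order.bottom /\ h Order.top = Order.top) &
      ((forall x y, h (f x y) = f' (h x) (h y)) /\ (forall x y, h (g x y) = g' (h x) (h y)))].

(* If f(x, y) lies in an ultrafilter U, two applications of the prime ideal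
   theorem (first avoiding {a | f(a, y) not in U}, then {b | f(a, b) not in U
   for some a in U1}) give ultrafilters U1 containing x and U3 containing y with
   Q_f(U1, U, U3); so h(f(x, y)) = <Q_f>(h x, h y).  The same argument applied
   to the normal additive operator -g(., .) gives h(g(x, y)) = [[S_g]](h x, h y).
   For the axioms, each one of A forces a first-order condition on the canonical
   frame (Ult A, Q_f, S_g) -- ABT0 makes Q_f reflexive, ABT3 turns
   Q_f(x, u, w) and S_g(x, w, u) into u = w, and so on -- and in every complex
   algebra <2^W, <R>, [[S]]> that condition gives the axiom back. *)

From mathcomp Require Import all_boot all_order.
From mathcomp Require Import boolp classical_sets.
Set Implicit Arguments. Unset Strict Implicit. Unset Printing Implicit Defensive.
Import Order.Theory.

Section Ultrafilters.
Context {d : Order.disp_t} {A : ctbDistrLatticeType d}.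
Local Open Scope order_scope.
Implicit Types (a b c x y : A) (U V : Ult A).

Lemma ufS U x y : sval U x -> x <= y -> sval U y.
Proof. by case: (proj2_sig U) => _ _ _ + _; apply. Qed.

Lemma ufT U : sval U \top.
Proof. by case: (proj2_sig U). Qed.

Lemma uf_bot U : ~ sval U \bot.
Proof. by case: (proj2_sig U). Qed.

Lemma uf_neq0 U x : sval U x -> x <> \bot.
Proof. by move=> Ux x0; apply: (@uf_bot U); rewrite -x0. Qed.

Lemma ufI U x y : sval U (x `&` y) <-> sval U x /\ sval U y.
Proof.
split; first by move=> Uxy; split; apply: ufS Uxy _; rewrite ?leIl ?leIr.
by case: (proj2_sig U) => _ _ UI _ _ [Ux Uy]; apply: UI.
Qed.

Lemma ufC U x : sval U (~` x) <-> ~ sval U x.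
Proof.
split; last by case: (proj2_sig U) => _ _ _ _ /(_ x) [].
by move=> Unx Ux; apply: (@uf_neq0 U (x `&` ~` x)); [apply/ufI | rewrite meetxC].
Qed.

Lemma ufU U x y : sval U (x `|` y) <-> sval U x \/ sval U y.
Proof.
split; last by case=> [Ux|Uy]; [exact: ufS Ux (leUl x y) | exact: ufS Uy (leUr y x)].
move=> Uxy; have [Ux|/ufC Unx] := pselect (sval U x); [by left|right].
by have /ufI := conj Unx Uxy; rewrite meetUr meetCx join0x => /ufI[].
Qed.

Lemma uf_eq U V : (sval U `<=` sval V)%classic -> U = V.
Proof.
move=> UV; suff eUV : sval U = sval V.
  by case: U V UV eUV => [U HU] [V HV] /= _ eUV; subst V; congr exist; apply: Prop_irrelevance.
apply/seteqP; split=> // x Vx; apply: contrapT => /ufC/UV/ufC; exact.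
Qed.

Definition ideal (J : set A) : Prop :=
  [/\ J \bot, (forall a b, J a -> J b -> J (a `|` b)) & (forall a b, J a -> b <= a -> J b)].

Lemma ideal_setU_bigcup (J : set A) (F : set (set A)) :
  ideal J -> (forall I, F I -> ideal (J `|` I)%classic) -> total_on F subset ->
  ideal (J `|` \bigcup_(I in F) I)%classic.
Proof.
move=> [J0 JU JD] FJ Ftot; set JF := (J `|` _)%classic.
have idJI I : F I -> ideal (J `|` I)%classic /\ (J `|` I `<=` JF)%classic.
  by move=> FI; split=> [|c [Jc|Ic]]; [apply: FJ|left|right; exists I].
have common a b : JF a -> JF b ->
    exists2 K, ideal K /\ (K `<=` JF)%classic & K a /\ K b.
  case=> [Ja|[Ia FIa Iaa]] [Jb|[Ib FIb Ibb]].
  - by exists J; split=> //; apply: subsetUl.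
  - by exists (J `|` Ib)%classic; [apply: idJI|split; [left|right]].
  - by exists (J `|` Ia)%classic; [apply: idJI|split; [right|left]].
  - have [IaIb|IbIa] := Ftot _ _ FIa FIb.
    + by exists (J `|` Ib)%classic; [apply: idJI|split; right=> //; apply: IaIb].
    + by exists (J `|` Ia)%classic; [apply: idJI|split; right=> //; apply: IbIa].
split; first by left.
- by move=> a b Ha Hb; have [K [[_ KU _] KS] [Ka Kb]] := common a b Ha Hb; apply/KS/KU.
- by move=> a b Ha ba; have [K [[_ _ KD] KS] [Ka _]] := common a a Ha Ha; apply/KS/(KD a).
Qed.

Lemma ideal_adjoin (I : set A) a :
  ideal I -> ideal (fun c => exists2 m, I m & c <= m `|` a).
Proof.
move=> [I0 IU ID]; split.
- by exists \bot; rewrite ?le0x.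
- move=> b c [m Im bma] [m' Im' cm'a]; exists (m `|` m'); first exact: IU.
  by apply: le_trans (leU2 bma cm'a) _; rewrite joinACA joinxx.
- by move=> b c [m Im bma] cb; exists m => //; apply: le_trans bma.
Qed.

Lemma ultrafilter_compl_ideal (I : set A) :
  ideal I -> ~ I \top -> (forall a, I a \/ I (~` a)) -> ultrafilter [set a | I (~` a)].
Proof.
move=> [I0 IU ID] It Iprime; split=> /=.
- by rewrite compl1.
- by rewrite compl0.
- by move=> a b Ia Ib; rewrite complI; apply: IU.
- by move=> a b Ia ab; apply: ID Ia _; rewrite leC.
- by move=> a; rewrite complK; case: (Iprime a); [right|left].
Qed.

Lemma maximal_ideal_prime (I : set A) x :
  ideal I -> ~ I x -> (forall B, ideal B -> (I `<` B)%classic -> B x) ->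
  forall a, I a \/ I (~` a).
Proof.
move=> idI Ix Imax a; have [I0 IU ID] := idI.
have adjoin_x b : ~ I b -> exists2 m, I m & x <= m `|` b.
  move=> Ib; apply: Imax (ideal_adjoin b idI) _; split=> [c Ic|BI].
    by exists c; rewrite ?leUl.
  by apply: Ib; apply: BI; exists \bot; rewrite ?join0x.
apply: contrapT => /not_orP[/adjoin_x[m Im xma] /adjoin_x[m' Im' xm'a]].
apply: Ix; apply: ID (IU _ _ Im Im') _.
have := leI2 (le_trans xma (leU2 (leUl m m') (lexx a)))
             (le_trans xm'a (leU2 (leUr m' m) (lexx (~` a)))).
by rewrite meetxx -joinIr meetxC joinx0.
Qed.

Lemma ex_ultrafilter_avoiding (J : set A) x : ideal J -> ~ J x ->
  exists U : Ult A, sval U x /\ forall a, sval U a -> ~ J a.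
Proof.
move=> idJ Jx.
(* Joining with [J] makes the union of the empty chain acceptable to Zorn. *)
pose P (I : set A) := ideal (J `|` I)%classic /\ ~ I x.
have [M [[idI Mx] Mmax]] : exists M, P M /\ forall B, (M `<` B)%classic -> ~ P B.
  apply: Zorn_bigcup => F FP Ftot; split.
    by apply: ideal_setU_bigcup => // I /FP[].
  by case=> I /FP[].
pose I := (J `|` M)%classic.
have Ix : ~ I x by case.
have Imax B : ideal B -> (I `<` B)%classic -> B x.
  move=> idB [IB BI]; apply: contrapT => Bx; apply: (Mmax B).
    by split=> [c Mc|BM]; [apply: IB; right|apply: BI => c /BM Mc; right].
  by split=> //; rewrite (setUidPr _ _).2 // => c Jc; apply: IB; left.
have [_ IU ID] := idI.
have Iprime := maximal_ideal_prime idI Ix Imax.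
have UV : ultrafilter [set a | I (~` a)].
  by apply: ultrafilter_compl_ideal => // It; apply: Ix; apply: ID It (lex1 x).
exists (exist _ _ UV) => /=; split; first by case: (Iprime x).
move=> a Ia Ja; apply: Ix; apply: ID (lex1 x).
by rewrite -(joinxC a); apply: IU => //; left.
Qed.

End Ultrafilters.

Section StoneMap.
Context {d : Order.disp_t} {A : ctbDistrLatticeType d}.
Local Open Scope order_scope.
Implicit Types (a b x y : A) (k : A -> A -> A) (U : Ult A).

Lemma additiveSl k a a' b : additive k -> a <= a' -> k a b <= k a' b.
Proof. by case=> kU _ /join_idPr <-; rewrite kU leUl. Qed.

Lemma additiveSr k a b b' : additive k -> b <= b' -> k a b <= k a b'.
Proof. by case=> _ kU /join_idPr <-; rewrite kU leUl. Qed.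

Lemma coadditiveSl k a a' b : coadditive k -> a <= a' -> k a' b <= k a b.
Proof. by case=> kI _ /join_idPr <-; rewrite kI leIl. Qed.

Lemma coadditiveSr k a b b' : coadditive k -> b <= b' -> k a b' <= k a b.
Proof. by case=> _ kI /join_idPr <-; rewrite kI leIl. Qed.

Lemma ex_ultrafilter x : x <> \bot -> exists U : Ult A, sval U x.
Proof.
move=> x0; have idbot : ideal (fun a : A => a = \bot).
  split=> // [a b -> ->|a b -> ba]; first by rewrite joinxx.
  by apply/eqP; rewrite -lex0.
by have [U [Ux _]] := ex_ultrafilter_avoiding idbot x0; exists U.
Qed.

Lemma stone_le x y : (forall U : Ult A, sval U x -> sval U y) -> x <= y.
Proof.
move=> xy; have [xny0|/ex_ultrafilter[U /ufI[Ux /ufC Uy]]] := pselect (x `&` ~` y = \bot).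
  by rewrite -diff_eq0 diffE xny0.
by case: Uy; apply: xy.
Qed.

Lemma stone_inj : injective (@stone d A).
Proof.
move=> x y xy; apply: le_anti; apply/andP.
by split; apply: stone_le => U; rewrite -[sval U x]/(stone x U) xy.
Qed.

Lemma ideal_outside_uf k U (F : set A) :
  normal k -> additive k -> F \top -> (forall a a', F a -> F a' -> F (a `&` a')) ->
  ideal (fun b => exists2 a, F a & ~ sval U (k a b)).
Proof.
move=> kn ka FT FI; split.
- by exists \top => //; rewrite kn; [apply: uf_bot|right].
- move=> b b' [a Fa Ukab] [a' Fa' Ukab']; exists (a `&` a'); first exact: FI.
  rewrite (proj2 ka) => /ufU[Ub|Ub']; [apply: Ukab|apply: Ukab'].
    by apply: ufS Ub _; apply: additiveSl; rewrite ?leIl.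
  by apply: ufS Ub' _; apply: additiveSl; rewrite ?leIr.
- move=> b b' [a Fa Ukab] b'b; exists a => // Ukab'.
  by apply/Ukab/(ufS Ukab'); apply: additiveSr.
Qed.

Lemma ex_Q_f k U x y : normal k -> additive k -> sval U (k x y) ->
  exists U1 U3, [/\ sval U1 x, sval U3 y & Q_f k U1 U U3].
Proof.
move=> kn ka Ukxy.
pose kT a b := k b a.
have kTn : normal kT by move=> a b ab; apply: kn; case: ab; [right|left].
have kTa : additive kT by case: ka => kl kr; split=> ? ? ?; [apply: kr|apply: kl].
have idJ1 : ideal (fun a => exists2 b, y <= b & ~ sval U (k a b)).
  by apply: (@ideal_outside_uf kT U (>= y)) => // b b' yb yb'; rewrite lexI yb.
have J1x : ~ (exists2 b, y <= b & ~ sval U (k x b)).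
  by case=> b yb; apply; apply: ufS Ukxy _; apply: additiveSr.
have [U1 [U1x U1J1]] := ex_ultrafilter_avoiding idJ1 J1x.
have U1k a : sval U1 a -> sval U (k a y).
  by move=> U1a; apply: contrapT => Ukay; apply: U1J1 U1a _; exists y.
have idJ3 : ideal (fun b => exists2 a, sval U1 a & ~ sval U (k a b)).
  by apply: ideal_outside_uf => // [|a a' U1a U1a']; [apply: ufT|apply/ufI].
have J3y : ~ (exists2 a, sval U1 a & ~ sval U (k a y)) by case=> a /U1k.
have [U3 [U3y U3J3]] := ex_ultrafilter_avoiding idJ3 J3y.
exists U1, U3; split=> // a b U1a U3b.
by apply: contrapT => Ukab; apply: U3J3 U3b _; exists a.
Qed.

Lemma stone_diamondR k x y : normal k -> additive k ->
  stone (k x y) = diamondR (Q_f k) (stone x) (stone y).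
Proof.
move=> kn ka; apply/seteqP; split=> U.
  by move=> /(ex_Q_f kn ka)[U1 [U3 [U1x U3y Q]]]; exists U1, U3.
by case=> U1 [U3 [U1x U3y Q]]; apply: Q.
Qed.

Lemma stone_boxR k x y : conormal k -> coadditive k ->
  stone (k x y) = boxR (S_g k) (stone x) (stone y).
Proof.
move=> kn ka; apply/seteqP; split=> [U Ukxy U1 U3 U1x U3y|U SU]; first by exists x, y.
pose nk a b := ~` k a b.
have nkn : normal nk by move=> a b ab; rewrite /nk kn // compl1.
have nka : additive nk by case: ka => kl kr; split=> *; rewrite /nk ?kl ?kr complI.
apply: contrapT => /ufC /(ex_Q_f nkn nka)[U1 [U3 [U1x U3y Q]]].
have [a [b [U1a U3b Ukab]]] := SU U1 U3 U1x U3y.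
by have /ufC := Q a b U1a U3b.
Qed.

Lemma stone_embedding f g : normal f -> additive f -> conormal g -> coadditive g ->
  embedding f g (Em_f f) (Em_g g) (@stone d A).
Proof.
move=> fn fa gn ga; split; first exact: stone_inj.
split.
- by move=> x y; apply/funext => U; apply/propext; apply: ufU.
- by move=> x y; apply/funext => U; apply/propext; apply: ufI.
- by move=> x; apply/funext => U; apply/propext; apply: ufC.
- by split; apply/funext => U; apply/propext; split=> //; [apply: uf_bot|move=> _; apply: ufT].
- by split=> x y; [apply: stone_diamondR|apply: stone_boxR].
Qed.

End StoneMap.

Section ComplexAlgebra.
Variables (W : Type) (R S : W -> W -> W -> Prop).
Implicit Types (X Y Z : set W).

Lemma nonempty_set X : X <> \bot%O -> exists w, X w.
Proof. by move=> X0; apply: contrapT => /nonemptyPn /X0. Qed.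

Lemma diamondR_normal : normal (diamondR R).
Proof.
move=> X Y XY; apply/seteqP; split=> // u [x [y [Xx Yy _]]].
by case: XY => XY; rewrite XY in Xx Yy.
Qed.

Lemma diamondR_additive : additive (diamondR R).
Proof.
split=> [X X' Y|X Y Y']; rewrite !joinEset; apply/seteqP; split=> u.
- by case=> x [y [[Xx|Xx] Yy Rxuy]]; [left|right]; exists x, y.
- by case=> -[x [y [Xx Yy Rxuy]]]; exists x, y; split=> //; [left|right].
- by case=> x [y [Xx [Yy|Yy] Rxuy]]; [left|right]; exists x, y.
- by case=> -[x [y [Xx Yy Rxuy]]]; exists x, y; split=> //; [left|right].
Qed.

Lemma boxR_conormal : conormal (boxR S).
Proof.
move=> X Y XY; apply/seteqP; split=> // u _ x y Xx Yy.
by case: XY => XY; rewrite XY in Xx Yy.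
Qed.

Lemma boxR_coadditive : coadditive (boxR S).
Proof.
split=> [X X' Y|X Y Y']; rewrite !joinEset !meetEset; apply/seteqP; split=> u.
- by move=> Su; split=> x y Xx Yy; apply: Su => //; [left|right].
- by case=> Su Su' x y [Xx|Xx] Yy; [apply: Su|apply: Su'].
- by move=> Su; split=> x y Xx Yy; apply: Su => //; [left|right].
- by case=> Su Su' x y Xx [Yy|Yy]; [apply: Su|apply: Su'].
Qed.

Lemma diamondR_boxR_PS (w : W) : PS_algebra (diamondR R) (boxR S).
Proof.
split; [|exact: diamondR_normal|exact: diamondR_additive
        |exact: boxR_conormal|exact: boxR_coadditive].
by move=> bot_top; have : (\top%O : set W) w by []; rewrite -bot_top.
Qed.

Lemma diamondR_ABT0 : (forall u, R u u u) -> ABT0 (diamondR R).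
Proof. by move=> Ruuu X; rewrite subsetEset => u Xu; exists u, u. Qed.

Lemma diamondR_ABT1f : (forall x u y, R x u y -> R y u x) -> ABT1f (diamondR R).
Proof.
by move=> Rsym X Y; rewrite subsetEset => u [x [y [Xx Yy /Rsym Ryux]]]; exists y, x.
Qed.

Lemma boxR_ABT1g : (forall x u y, S x u y -> S y u x) -> ABT1g (boxR S).
Proof. by move=> Ssym X Y; rewrite subsetEset => u Su y x Yy Xx; apply/Ssym/Su. Qed.

Lemma diamondR_ABT2 : (forall x u z, R x u z -> R x x u) -> ABT2 (diamondR R).
Proof.
move=> Rxxu X Y Z; rewrite subsetEset meetEset => u [Yu [x [z [Xx Zz Rxuz]]]].
exists x, z; split=> //; rewrite meetEset; split=> //.
by exists x, u; split=> //; apply: Rxxu Rxuz.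
Qed.

Lemma diamondR_boxR_ABT3 : (forall x u w, R x u w -> S x w u -> u = w) ->
  ABT3 (diamondR R) (boxR S).
Proof.
move=> RS X Y; rewrite subsetEset meetEset => u [x [w [Xx [Sw Yw] Rxuw]]].
apply: contrapT => Yu; have u_w := RS x u w Rxuw (Sw x u Xx Yu).
by apply: Yu; rewrite u_w.
Qed.

Lemma diamondR_boxR_wMIA : (forall x u y, S x u y -> R x u y) ->
  wMIA (diamondR R) (boxR S).
Proof.
move=> SR X Y /nonempty_set[x Xx] /nonempty_set[y Yy]; rewrite subsetEset => u Su.
by exists x, y; split=> //; apply/SR/Su.
Qed.

Lemma boxR_ABTW : (forall x u, S x u x -> u = x) -> ABTW (boxR S).
Proof.
move=> Sxux X /nonempty_set[x Xx]; rewrite subsetEset => u Su.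
by rewrite (Sxux x u (Su x x Xx Xx)).
Qed.

Lemma diamondR_ABT2s : (forall u y, R u u y) -> ABT2s (diamondR R).
Proof.
by move=> Ruuy X Y /nonempty_set[y Yy]; rewrite subsetEset => u Xu; exists u, y.
Qed.

End ComplexAlgebra.

Section CanonicalFrame.
Context {d : Order.disp_t} {A : ctbDistrLatticeType d}.
Local Open Scope order_scope.
Variables f g : A -> A -> A.
Implicit Types (U V W : Ult A).

Lemma ABT0_frame : additive f -> ABT0 f -> forall U, Q_f f U U U.
Proof.
move=> fa ax U a b Ua Ub; have Uab : sval U (a `&` b) by apply/ufI.
apply: ufS (ufS Uab (ax _)) _.
exact: le_trans (additiveSl _ fa (leIl a b)) (additiveSr _ fa (leIr b a)).
Qed.

Lemma ABT1f_frame : ABT1f f -> forall U V W, Q_f f U V W -> Q_f f W V U.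
Proof. by move=> ax U V W Q a b Wa Ub; apply: ufS (Q b a Ub Wa) (ax b a). Qed.

Lemma ABT1g_frame : ABT1g g -> forall U V W, S_g g U V W -> S_g g W V U.
Proof.
by move=> ax U V W [a [b [Ua Wb Vg]]]; exists b, a; split=> //; apply: ufS Vg (ax a b).
Qed.

Lemma ABT2_frame : normal f -> additive f -> ABT2 f ->
  forall U V W, Q_f f U V W -> Q_f f U U V.
Proof.
move=> fn fa ax U V W Q a b Ua Vb; apply: contrapT => /ufC Unf.
pose a' := a `&` ~` f a b.
have Ua' : sval U a' by apply/ufI.
have Vbf : sval V (b `&` f a' \top) by apply/ufI; split=> //; apply: Q (ufT W).
(* [a'] is disjoint from [f a' b <= f a b], so ABT2 puts [f \bot \top] in [V]. *)
have a'f0 : a' `&` f a' b = \bot.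
  apply/eqP; rewrite -lex0 -(meetCx (f a b)).
  exact: leI2 (leIr _ _) (additiveSl _ fa (leIl _ _)).
have : sval V (f (a' `&` f a' b) \top) by apply: ufS Vbf (ax _ _ _).
by rewrite a'f0 fn; [apply: uf_bot|left].
Qed.

Lemma ABT3_frame : coadditive g -> ABT3 f g ->
  forall U V W, Q_f f U V W -> S_g g U W V -> V = W.
Proof.
move=> ga ax U V W Q [a [b [Ua Vb Wg]]]; apply: uf_eq => c Vc.
apply: contrapT => /ufC Wnc.
(* Shrinking [b] to [b'] puts [~` b'] in [W]; ABT3 at [~` b'] then puts it in [V]. *)
pose b' := b `&` c.
have Vb' : sval V b' by apply/ufI.
have Wg' : sval W (g a b') by apply: ufS Wg _; apply: coadditiveSr; rewrite ?leIl.
have Wnb' : sval W (~` b') by apply: ufS Wnc _; rewrite leC leIr.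
have Wgb' : sval W (g a b' `&` ~` b') by apply/ufI.
by have := ax a (~` b'); rewrite complK => /(ufS (Q _ _ Ua Wgb')) /ufC /(_ Vb').
Qed.

Lemma wMIA_frame : additive f -> coadditive g -> wMIA f g ->
  forall U V W, S_g g U V W -> Q_f f U V W.
Proof.
move=> fa ga ax U V W [a [b [Ua Wb Vg]]] a' b' Ua' Wb'.
have Uaa' : sval U (a `&` a') by apply/ufI.
have Wbb' : sval W (b `&` b') by apply/ufI.
apply: ufS Vg _.
apply: le_trans (coadditiveSl _ ga (leIl a a')) _.
apply: le_trans (coadditiveSr _ ga (leIl b b')) _.
apply: le_trans (ax _ _ (uf_neq0 Uaa') (uf_neq0 Wbb')) _.
exact: le_trans (additiveSl _ fa (leIr a' a)) (additiveSr _ fa (leIr b' b)).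
Qed.

Lemma ABTW_frame : coadditive g -> ABTW g -> forall U V, S_g g U V U -> V = U.
Proof.
move=> ga ax U V [a [b [Ua Ub Vg]]]; apply/esym/uf_eq => c Uc.
pose e := a `&` b `&` c.
have Ue : sval U e by apply/ufI; split=> //; apply/ufI.
have Ve : sval V e.
  apply: ufS Vg (le_trans _ (ax e (uf_neq0 Ue))).
  apply: le_trans (coadditiveSl _ ga (_ : e <= a)) (coadditiveSr _ ga (_ : e <= b)).
    by rewrite /e -meetA leIl.
  by rewrite /e meetAC leIr.
by apply: ufS Ve _; rewrite leIr.
Qed.

Lemma ABT2s_frame : ABT2s f -> forall U W, Q_f f U U W.
Proof. by move=> ax U W a b Ua Wb; apply: ufS Ua (ax a b (uf_neq0 Wb)). Qed.

End CanonicalFrame.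

Section EmAlgebra.
Context {d : Order.disp_t} {A : ctbDistrLatticeType d}.
Local Open Scope order_scope.
Variables f g : A -> A -> A.

Lemma Em_PS : nontrivialBA A -> PS_algebra (Em_f f) (Em_g g).
Proof.
move=> nt; have [U _] : exists U : Ult A, sval U \top by apply: ex_ultrafilter => /esym.
exact: diamondR_boxR_PS U.
Qed.

Lemma Em_betweenness :
  betweenness_algebra f g -> betweenness_algebra (Em_f f) (Em_g g).
Proof.
move=> [[nt fn fa _ ga] [H0 [H1f [H1g [H2 [H3 HM]]]]]].
split; first exact: Em_PS.
do !split.
- exact/diamondR_ABT0/ABT0_frame.
- exact/diamondR_ABT1f/ABT1f_frame.
- exact/boxR_ABT1g/ABT1g_frame.
- exact/diamondR_ABT2/ABT2_frame.
- exact/diamondR_boxR_ABT3/ABT3_frame.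
- exact/diamondR_boxR_wMIA/wMIA_frame.
Qed.

Lemma Em_weak_betweenness :
  weak_betweenness_algebra f g -> weak_betweenness_algebra (Em_f f) (Em_g g).
Proof.
move=> [[nt fn fa _ ga] [H0 [H1f [H1g [H2 HW]]]]].
split; first exact: Em_PS.
do !split.
- exact/diamondR_ABT0/ABT0_frame.
- exact/diamondR_ABT1f/ABT1f_frame.
- exact/boxR_ABT1g/ABT1g_frame.
- exact/diamondR_ABT2/ABT2_frame.
- exact/boxR_ABTW/ABTW_frame.
Qed.

Lemma Em_strong_betweenness :
  strong_betweenness_algebra f g -> strong_betweenness_algebra (Em_f f) (Em_g g).
Proof.
move=> [[nt _ fa _ ga] [H1f [H1g [H3 [HM H2s]]]]].
split; first exact: Em_PS.
do !split.
- exact/diamondR_ABT1f/ABT1f_frame.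
- exact/boxR_ABT1g/ABT1g_frame.
- exact/diamondR_boxR_ABT3/ABT3_frame.
- exact/diamondR_boxR_wMIA/wMIA_frame.
- exact/diamondR_ABT2s/ABT2s_frame.
Qed.

End EmAlgebra.

Theorem theorem42 (d : Order.disp_t) (A : ctbDistrLatticeType d) (f g : A -> A -> A) :
  (betweenness_algebra f g ->
     embedding f g (Em_f f) (Em_g g) (@stone d A) /\
     betweenness_algebra (Em_f f) (Em_g g)) /\
  (weak_betweenness_algebra f g ->
     embedding f g (Em_f f) (Em_g g) (@stone d A) /\
     weak_betweenness_algebra (Em_f f) (Em_g g)) /\
  (strong_betweenness_algebra f g ->
     embedding f g (Em_f f) (Em_g g) (@stone d A) /\
     strong_betweenness_algebra (Em_f f) (Em_g g)).
Proof.
have embed : PS_algebra f g -> embedding f g (Em_f f) (Em_g g) (@stone d A).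
  by case=> _; apply: stone_embedding.
split; [|split].
- by move=> Hb; split; [apply: embed; case: Hb|apply: Em_betweenness].
- by move=> Hw; split; [apply: embed; case: Hw|apply: Em_weak_betweenness].
- by move=> Hs; split; [apply: embed; case: Hs|apply: Em_strong_betweenness].
Qed.
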